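(* Let $u,v,s$ satisfy $1<s<u<v^{-1}$ and $q=s^{-2}$. Then the constants $$a=\frac{ v (u-s^{-1}) (s^{-1} u-1)}{(1-u v) (1- s^{-2} u v)},\qquad b=\frac{ s^2-1}{(u-s)(1-su)},$$ $$c=\frac{1}{2} \left(a \left(\frac{1}{(u-s)^2}-\frac{s^2}{(1-s u)^2}\right)-\frac{s^{-4} v^2}{(1-s^{-2} u v)^2}+\frac{v^2}{(1-u v)^2} \right),\qquad d=\frac{- \sqrt{2 c}}{b}$$ satisfy $a>0$, $b<0$, $c>0$, $d>0$. *)

From Stdlib Require Import Reals.
Open Scope R_scope.

Definition q5 (s : R) : R := / (s ^ 2).

Definition a5 (u v s : R) : R :=
  v * (u - / s) * (/ s * u - 1) / ((1 - u * v) * (1 - / (s ^ 2) * u * v)).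

Definition b5 (u s : R) : R := (s ^ 2 - 1) / ((u - s) * (1 - s * u)).

Definition c5 (u v s : R) : R :=
  / 2 * (a5 u v s * (/ ((u - s) ^ 2) - s ^ 2 / ((1 - s * u) ^ 2))
         - / (s ^ 4) * v ^ 2 / ((1 - / (s ^ 2) * u * v) ^ 2)
         + v ^ 2 / ((1 - u * v) ^ 2)).

Definition d5 (u v s : R) : R := - sqrt (2 * c5 u v s) / b5 u s.

(* Clearing the powers of [s] in the denominators, every constant becomes a
   quotient of factors whose signs are fixed by [1 < s < u] and [u v < 1]:
   [a = v (s u - 1) (u - s) / ((1 - u v) (s^2 - u v))], [b = - (s^2 - 1) / ((u - s) (s u - 1))],
   and both differences in [c] are differences of squares of positive numbers,
   [(s u - 1)^2 - (s (u - s))^2] and [(s^2 - u v)^2 - (1 - u v)^2]. *)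
From Stdlib Require Import Reals Lra.
Open Scope R_scope.

Lemma Rinv_pos_of_lt (u v : R) : 0 < u -> u < / v -> 0 < v.
Proof.
  intros Hu Huv.
  destruct (Rtotal_order v 0) as [Hn | [H0 | Hp]]; [| | exact Hp].
  - pose proof (Rinv_lt_0_compat v Hn); lra.
  - subst v; rewrite Rinv_0 in Huv; lra.
Qed.

Lemma Rmult_lt_1_of_lt_Rinv (u v : R) : 0 < v -> u < / v -> u * v < 1.
Proof.
  intros Hv Huv.
  apply (Rmult_lt_compat_r v) in Huv; [| exact Hv].
  rewrite Rinv_l in Huv; lra.
Qed.

Lemma neg_sqrt_div_neg_pos (b c : R) : 0 < c -> b < 0 -> 0 < - sqrt (2 * c) / b.
Proof.
  intros Hc Hb.
  assert (Hsqrt : 0 < sqrt (2 * c)) by (apply sqrt_lt_R0; lra).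
  replace (- sqrt (2 * c) / b) with (sqrt (2 * c) / - b) by (field; lra).
  apply Rdiv_lt_0_compat; lra.
Qed.

Section Constants.

Variables u v s : R.
Hypotheses (Hs : 1 < s) (Hsu : s < u) (Hv : 0 < v) (Huv : u * v < 1).

Let Hs2 : 1 < s ^ 2. Proof. nra. Qed.
Let Hsu1 : 0 < s * u - 1. Proof. nra. Qed.

Lemma a5_pos : 0 < a5 u v s.
Proof.
  unfold a5.
  replace (v * (u - / s) * (/ s * u - 1) / ((1 - u * v) * (1 - / (s ^ 2) * u * v)))
    with (v * (s * u - 1) * (u - s) / ((1 - u * v) * (s ^ 2 - u * v)))
    by (field; lra).
  apply Rdiv_lt_0_compat.
  - apply Rmult_lt_0_compat; [apply Rmult_lt_0_compat |]; lra.
  - apply Rmult_lt_0_compat; lra.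
Qed.

Lemma b5_neg : b5 u s < 0.
Proof.
  unfold b5.
  replace ((s ^ 2 - 1) / ((u - s) * (1 - s * u)))
    with (- ((s ^ 2 - 1) / ((u - s) * (s * u - 1)))) by (field; lra).
  assert (0 < (s ^ 2 - 1) / ((u - s) * (s * u - 1))); [| lra].
  apply Rdiv_lt_0_compat; [lra |].
  apply Rmult_lt_0_compat; lra.
Qed.

Lemma inv_sq_sub_pos : 0 < / ((u - s) ^ 2) - s ^ 2 / ((1 - s * u) ^ 2).
Proof.
  replace (/ ((u - s) ^ 2) - s ^ 2 / ((1 - s * u) ^ 2))
    with (((s * u - 1) ^ 2 - (s * (u - s)) ^ 2) / ((u - s) ^ 2 * (s * u - 1) ^ 2))
    by (field; lra).
  assert (Hlow : 0 < s * (u - s)) by nra.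
  assert (Hhigh : s * (u - s) < s * u - 1) by nra.
  apply Rdiv_lt_0_compat; [nra |].
  apply Rmult_lt_0_compat; apply pow_lt; lra.
Qed.

Lemma v_sq_terms_pos :
  0 < - / (s ^ 4) * v ^ 2 / ((1 - / (s ^ 2) * u * v) ^ 2) + v ^ 2 / ((1 - u * v) ^ 2).
Proof.
  replace (- / (s ^ 4) * v ^ 2 / ((1 - / (s ^ 2) * u * v) ^ 2) + v ^ 2 / ((1 - u * v) ^ 2))
    with (v ^ 2 * ((s ^ 2 - u * v) ^ 2 - (1 - u * v) ^ 2)
          / ((1 - u * v) ^ 2 * (s ^ 2 - u * v) ^ 2))
    by (field; nra).
  apply Rdiv_lt_0_compat.
  - apply Rmult_lt_0_compat; nra.
  - apply Rmult_lt_0_compat; apply pow_lt; lra.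
Qed.

Lemma c5_pos : 0 < c5 u v s.
Proof.
  unfold c5.
  pose proof (Rmult_lt_0_compat _ _ a5_pos inv_sq_sub_pos).
  pose proof v_sq_terms_pos.
  lra.
Qed.

End Constants.

Theorem lemma5p1 (u v s q : R) :
  1 < s -> s < u -> u < / v -> q = / (s ^ 2) ->
  0 < a5 u v s /\ b5 u s < 0 /\ 0 < c5 u v s /\ 0 < d5 u v s.
Proof.
  intros Hs Hsu Huv _.
  assert (Hv : 0 < v) by (apply (Rinv_pos_of_lt u); lra).
  assert (Huv1 : u * v < 1) by (apply Rmult_lt_1_of_lt_Rinv; assumption).
  pose proof (b5_neg u s Hs Hsu) as Hb.
  pose proof (c5_pos u v s Hs Hsu Hv Huv1) as Hc.
  repeat split.
  - exact (a5_pos u v s Hs Hsu Hv Huv1).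
  - exact Hb.
  - exact Hc.
  - exact (neg_sqrt_div_neg_pos _ _ Hc Hb).
Qed.
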